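(* For every ultimately periodic trace $\pi$, $\mathrm{cct}(\pi)$ is a complete consistent theory of LTL, and the map $\mathrm{cct}:\mathrm{UP}\to\mathrm{CCT}_{LTL}$ is a bijection.
   Context: Fix a finite nonempty $AP$. LTL formulae: $\varphi::=\bot\mid p\mid\neg\varphi\mid\varphi\lor\varphi\mid X\varphi\mid\varphi U\varphi$. Traces $\pi=a_0a_1\dots$ ($a_i\subseteq AP$), $\pi^i=a_ia_{i+1}\dots$; $\pi\models p$ iff $p\in a_0$, $\pi\models X\varphi$ iff $\pi^1\models\varphi$, $\pi\models\varphi U\psi$ iff $\exists i\ge0$: $\pi^i\models\psi$ and $\forall j<i$: $\pi^j\models\varphi$; $\bot,\neg,\lor$ as usual. Kripke structure $M=(S,I,T,\lambda)$: finite $S$, nonempty $I\subseteq S$, left-total $T\subseteq S\times S$, $\lambda:S\to2^{AP}$; traces of $M$: $\lambda(s_0)\lambda(s_1)\dots$ with $s_0\in I$, $(s_i,s_{i+1})\in T$. $M\models\varphi$ iff all its traces satisfy $\varphi$. $\mathrm{Cn}_{LTL}(X)$ = formulae satisfied by every Kripke structure satisfying $X$. Theory: $K=\mathrm{Cn}_{LTL}(K)$; consistent: $K$ is not the set of all formulae; complete: $\varphi\in K$ or $\neg\varphi\in K$ for every $\varphi$; $\mathrm{CCT}_{LTL}$ is the set of complete consistent LTL theories. $\mathrm{UP}$ is the set of ultimately periodic traces $\rho\sigma^\omega$ ($\rho,\sigma$ finite, $\sigma$ nonempty); $\mathrm{cct}(\pi):=\{\varphi\mid\pi\models\varphi\}$.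 *)

From mathcomp Require Import all_boot.
Set Implicit Arguments. Unset Strict Implicit. Unset Printing Implicit Defensive.

Section LTL.
Variable AP : finType.

Inductive form : Type :=
| FBot : form
| FVar : AP -> form
| FNeg : form -> form
| FOr  : form -> form -> form
| FX   : form -> form
| FU   : form -> form -> form.

Definition trace := nat -> {set AP}.

Definition suffix (pi : trace) (i : nat) : trace := fun k => pi (i + k).

Fixpoint sat (pi : trace) (phi : form) : Prop :=
  match phi with
  | FBot => False
  | FVar p => p \in pi 0
  | FNeg f => ~ sat pi f
  | FOr f g => sat pi f \/ sat pi g
  | FX f => sat (suffix pi 1) f
  | FU f g => exists i, sat (suffix pi i) g /\ forall j, j < i -> sat (suffix pi j) f
  end.

Unset Implicit Arguments.
Record kripke := Kripke {
  kS : finType;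
  kI : {set kS};
  kT : rel kS;
  kL : kS -> {set AP};
  kI_nonempty : kI != set0;
  kT_total : forall s, exists s', kT s s'
}.
Set Implicit Arguments.

Definition is_trace_of (M : kripke) (pi : trace) : Prop :=
  exists s : nat -> kS M,
    [/\ s 0 \in kI M, (forall i, kT M (s i) (s i.+1)) & (forall i, pi i = kL M (s i))].

Definition kmodels (M : kripke) (phi : form) : Prop :=
  forall pi, is_trace_of M pi -> sat pi phi.

Definition fset_ := form -> Prop.

Definition Cn (X : fset_) : fset_ :=
  fun phi => forall M : kripke, (forall psi, X psi -> kmodels M psi) -> kmodels M phi.

Definition is_theory (K : fset_) : Prop := forall phi, K phi <-> Cn K phi.
Definition consistent (K : fset_) : Prop := exists phi, ~ K phi.
Definition complete (K : fset_) : Prop := forall phi, K phi \/ K (FNeg phi).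

Definition CCT (K : fset_) : Prop := [/\ is_theory K, consistent K & complete K].

Definition omega_word (rho sigma : seq {set AP}) : trace :=
  fun i => if i < size rho then nth set0 rho i
           else nth set0 sigma ((i - size rho) %% size sigma).

Definition UP (pi : trace) : Prop :=
  exists (rho sigma : seq {set AP}), size sigma > 0 /\ forall i, pi i = omega_word rho sigma i.

Definition cct (pi : trace) : fset_ := fun phi => sat pi phi.

End LTL.

(* A complete consistent theory K has a counter-model M of some formula, and M
   satisfies K; by completeness every trace of M then has exactly the theory K.
   Since M is finite, following one successor choice from an initial state
   eventually cycles, which yields an ultimately periodic trace of M.
   Conversely an ultimately periodic trace is the only trace of a lasso-shaped
   Kripke structure, so its theory is closed under consequence; and a trace is
   recovered from its theory through the formulae X^i p. *)

From Pilot Require Import Defs.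
From mathcomp Require Import all_boot zify.
From Stdlib Require Import Classical FunctionalExtensionality.

Set Implicit Arguments.
Unset Strict Implicit.

Section Traces.
Variable AP : finType.
Implicit Types (pi : trace AP) (phi : form AP).

Lemma suffix0 pi : Defs.suffix pi 0 = pi.
Proof. exact: functional_extensionality. Qed.

Lemma suffixD pi i j : Defs.suffix (Defs.suffix pi i) j = Defs.suffix pi (i + j).
Proof. by apply: functional_extensionality => k; rewrite /Defs.suffix addnA. Qed.

Lemma sat_iterX i pi phi : sat pi (iter i (@FX AP) phi) <-> sat (Defs.suffix pi i) phi.
Proof.
elim: i pi => [|i IH] pi /=; first by rewrite suffix0.
by rewrite IH suffixD add1n.
Qed.

Lemma cct_inj pi1 pi2 : (forall phi, cct pi1 phi <-> cct pi2 phi) -> pi1 =1 pi2.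
Proof.
move=> Eth i; apply/setP => x.
have := Eth (iter i (@FX AP) (FVar x)).
rewrite /cct !sat_iterX /= /Defs.suffix !addn0 => -[h1 h2].
exact/idP/idP.
Qed.

End Traces.

Definition eventually_periodic (T : Type) (u : nat -> T) (m p : nat) :=
  forall k, m <= k -> u (k + p) = u k.

Lemma eventually_periodicM (T : Type) (u : nat -> T) m p :
  eventually_periodic u m p -> forall q k, m <= k -> u (k + q * p) = u k.
Proof.
move=> Hp; elim=> [|q IH] k hk; first by rewrite mul0n addn0.
by rewrite mulSn addnA IH; [exact: Hp | lia].
Qed.

Lemma iter_eventually_periodic (S : finType) (f : S -> S) (s0 : S) :
  exists m p, 0 < p /\ eventually_periodic (fun i => iter i f s0) m p.
Proof.
have [m [p [p_gt0 Emp]]] : exists m p, 0 < p /\ iter (m + p) f s0 = iter m f s0.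
  have /injectivePn [x [y nxy Exy]] :
      ~~ injectiveb (fun i : 'I_#|S|.+1 => iter i f s0).
    by apply/negP => /injectiveP /leq_card; rewrite card_ord; lia.
  case: (ltngtP x y) => [lt|lt|/val_inj exy]; last by rewrite exy eqxx in nxy.
    by exists x, (y - x); split; [lia | rewrite subnKC ?(ltnW lt)].
  by exists y, (x - y); split; [lia | rewrite subnKC ?(ltnW lt)].
exists m, p; split=> // k le_mk /=.
by rewrite -(subnK le_mk) -addnA iterD Emp -iterD.
Qed.

Section UltimatelyPeriodic.
Variable AP : finType.
Implicit Types (pi : trace AP).

Lemma UP_eventually_periodic pi :
  UP pi -> exists m p, 0 < p /\ eventually_periodic pi m p.
Proof.
move=> [rho [sigma [sigma_gt0 Epi]]].
exists (size rho), (size sigma); split=> // k le_rk.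
rewrite !Epi /omega_word.
have -> : (k + size sigma < size rho) = false by apply/negbTE; lia.
have -> : (k < size rho) = false by apply/negbTE; lia.
by rewrite -addnBAC // modnDr.
Qed.

Lemma eventually_periodic_UP pi m p :
  0 < p -> eventually_periodic pi m p -> UP pi.
Proof.
move=> p_gt0 Hp.
exists (mkseq pi m), (mkseq (fun j => pi (m + j)) p); rewrite size_mkseq.
split=> // i; rewrite /omega_word !size_mkseq.
case: ifP => lt_im; first by rewrite nth_mkseq.
rewrite nth_mkseq ?ltn_pmod //.
have Ei : i = m + (i - m) %% p + (i - m) %/ p * p.
  by have := divn_eq (i - m) p; move/negbT: lt_im; lia.
by rewrite {1}Ei (eventually_periodicM Hp) //; lia.
Qed.

End UltimatelyPeriodic.

Section FunctionalKripke.
Variables (AP : finType) (S : finType) (s0 : S) (f : S -> S) (L : S -> {set AP}).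

Lemma set1_neq0 : [set s0] != set0.
Proof. by apply/set0Pn; exists s0; rewrite set11. Qed.

Lemma graph_total : forall s, exists s', (fun a b => b == f a) s s'.
Proof. by move=> s; exists (f s). Qed.

Definition fun_kripke : kripke AP :=
  @Kripke AP S [set s0] (fun a b => b == f a) L set1_neq0 graph_total.

Lemma fun_kripke_traceP (pi : trace AP) :
  is_trace_of fun_kripke pi <-> pi = (fun i => L (iter i f s0)).
Proof.
split=> [[s [s_0 s_step s_lab]]|->]; last by exists (fun i => iter i f s0); rewrite /= set11.
have Es i : s i = iter i f s0.
  elim: i => [|i IH]; first by apply/eqP; rewrite -in_set1.
  by rewrite iterS -IH; apply/eqP; exact: s_step.
by apply: functional_extensionality => i; rewrite s_lab Es.
Qed.

End FunctionalKripke.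

Section Lasso.
Variables (AP : finType) (pi : trace AP) (m p : nat).
Hypotheses (p_gt0 : 0 < p) (pi_per : eventually_periodic pi m p).

(* States [0, ..., m + p - 1]; the last one loops back to [m]. *)
Let n := (m + p).-1.

Definition lasso_next (k : 'I_n.+1) : 'I_n.+1 := if k < n then inord k.+1 else inord m.

Lemma lasso_next_label i : pi (iter i lasso_next ord0) = pi i.
Proof.
have m_le_n : m <= n by rewrite /n; lia.
suff shift : forall k, pi (iter i lasso_next ord0 + k) = pi (i + k).
  by have := shift 0; rewrite !addn0.
elim: i => [|i IH] k; first by rewrite add0n.
rewrite iterS /lasso_next; set s := iter i _ _.
have s_le_n : s <= n by rewrite -ltnS ltn_ord.
case: ifP => lt_sn.
  by rewrite inordK ?addSnnS ?IH.
have Es : (s : nat) = n by move/negbT: lt_sn; lia.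
rewrite inordK // addSnnS -IH Es -pi_per; last by lia.
by congr (pi _); rewrite /n; lia.
Qed.

Lemma lasso_unique_trace :
  exists M : kripke AP, forall pi', is_trace_of M pi' <-> pi' = pi.
Proof.
exists (fun_kripke ord0 lasso_next (fun k => pi k)) => pi'.
rewrite fun_kripke_traceP.
suff -> : (fun i => pi (iter i lasso_next ord0)) = pi by [].
exact/functional_extensionality/lasso_next_label.
Qed.

End Lasso.

Section Theories.
Variable AP : finType.
Implicit Types (pi : trace AP) (K : fset_ AP).

Lemma unique_trace_CCT (M : kripke AP) pi :
  (forall pi', is_trace_of M pi' <-> pi' = pi) -> CCT (cct pi).
Proof.
move=> traceM; split.
- move=> phi; split=> [Kphi M' HM'|Cphi]; first exact: HM'.
  apply: (Cphi M); last exact/traceM.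
  by move=> psi sat_psi pi' /traceM ->.
- by exists (FBot AP).
- by move=> phi; apply: classic.
Qed.

Lemma consistent_theory_model K :
  is_theory K -> consistent K -> exists M : kripke AP, forall psi, K psi -> kmodels M psi.
Proof.
move=> thK [phi0 nK_phi0].
apply: NNPP => no_model; apply: nK_phi0; apply/thK => M HM.
by case: no_model; exists M.
Qed.

Lemma complete_model_trace_cct K (M : kripke AP) pi :
  complete K -> (forall psi, K psi -> kmodels M psi) -> is_trace_of M pi ->
  forall phi, K phi <-> cct pi phi.
Proof.
move=> cpK HM trpi phi; split=> [Kphi|sat_phi]; first exact: HM.
by case: (cpK phi) => // /HM /(_ pi trpi).
Qed.

Lemma kripke_UP_trace (M : kripke AP) : exists pi, UP pi /\ is_trace_of M pi.
Proof.
have [s0 s0_init] := set0Pn _ (kI_nonempty _ M).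
pose f s := xchoose (kT_total _ M s).
have [m [p [p_gt0 per]]] := iter_eventually_periodic f s0.
exists (fun i => kL _ M (iter i f s0)); split.
  by apply: (eventually_periodic_UP p_gt0) => k /per /= ->.
by exists (fun i => iter i f s0); split=> // i; rewrite iterS; exact: xchooseP.
Qed.

End Theories.

Theorem mainTheorem11 (AP : finType) (hAP : 0 < #|AP|) :
  (forall pi : trace AP, UP pi -> CCT (cct pi)) /\
  (forall pi1 pi2 : trace AP, UP pi1 -> UP pi2 ->
     (forall phi, cct pi1 phi <-> cct pi2 phi) -> forall i, pi1 i = pi2 i) /\
  (forall K : fset_ AP, CCT K -> exists pi, UP pi /\ forall phi, K phi <-> cct pi phi).
Proof.
split; [|split].
- move=> pi /UP_eventually_periodic [m [p [p_gt0 per]]].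
  have [M traceM] := lasso_unique_trace p_gt0 per.
  exact: unique_trace_CCT traceM.
- by move=> pi1 pi2 _ _ /cct_inj.
- move=> K [thK conK cpK].
  have [M HM] := consistent_theory_model thK conK.
  have [pi [UPpi trpi]] := kripke_UP_trace M.
  by exists pi; split; last exact: complete_model_trace_cct HM trpi.
Qed.
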